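(* Let $G$ be a finite group. Then every character in $\mathrm{Irr}(G\mid U(G))$ is fully ramified with respect to $Z(G)$, and $U(G)$ is the largest subgroup of $G$ with this property: if $H\le G$ is any subgroup such that every character in $\mathrm{Irr}(G\mid H)$ is fully ramified with respect to $Z(G)$, then $H\le U(G)$.
   Context: All groups are finite. For a subgroup $H\le G$, $\mathrm{Irr}(G\mid H)$ is the set of $\chi\in\mathrm{Irr}(G)$ with $H\not\le\ker(\chi)$. A character $\chi\in\mathrm{Irr}(G)$ is fully ramified with respect to $Z(G)$ if $\chi_{Z(G)}=\chi(1)\lambda$ for some $\lambda\in\mathrm{Irr}(Z(G))$ and $\chi(1)^2=|G:Z(G)|$ (equivalently, $\chi$ vanishes on $G\setminus Z(G)$). For a normal subgroup $H$ of $G$, let $V(G\mid H)$ be the subgroup generated by all $g\in G$ such that $\chi(g)\neq 0$ for some $\chi\in\mathrm{Irr}(G\mid H)$ (with $V(G\mid 1)=1$). For a normal subgroup $N$ of $G$, let $U(G\mid N)$ be the product of all normal subgroups $H$ of $G$ with $V(G\mid H)\le N$. Define $U(G)=U(G\mid Z(G))$. *)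

From HB Require Import structures.
From mathcomp Require Import all_boot all_order all_algebra all_fingroup all_solvable all_field all_character.
Set Implicit Arguments. Unset Strict Implicit. Unset Printing Implicit Defensive.
Import GRing.Theory Num.Theory.
Local Open Scope ring_scope.

(* chi in Irr(G | H) : H is not contained in ker chi *)
Definition irr_over (gT : finGroupType) (G : {group gT}) (H : {set gT})
  (i : Iirr G) : bool := ~~ (H \subset cfker 'chi[G]_i).

Definition fully_ramified (gT : finGroupType) (G : {group gT}) (i : Iirr G) : Prop :=
  (exists j : Iirr 'Z(G), 'Res['Z(G)] 'chi[G]_i = 'chi[G]_i 1%g *: 'chi[ 'Z(G)]_j)
  /\ ('chi[G]_i 1%g ^+ 2 = (#|G : 'Z(G)|%g)%:R).

Definition Vsub (gT : finGroupType) (G : {group gT}) (H : {set gT}) : {set gT} :=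
  (<<[set g in G | [exists i : Iirr G, irr_over H i && ('chi[G]_i g != 0%R)]]>>)%g.

Definition Usub (gT : finGroupType) (G : {group gT}) (N : {set gT}) : {set gT} :=
  (<<\bigcup_(H : {group gT} | (H <| G) && (Vsub G H \subset N)) H>>)%g.

Definition Ugrp (gT : finGroupType) (G : {group gT}) : {set gT} := Usub G 'Z(G)%g.

From HB Require Import structures.
From mathcomp Require Import all_boot all_order all_algebra all_fingroup all_solvable all_field all_character.
Local Open Scope group_scope.
Set Implicit Arguments.
Unset Strict Implicit.
Unset Printing Implicit Defensive.

(* An irreducible character restricts to a multiple of a linear character on a
   central subgroup Z, so '[Res[Z] chi] = chi(1)^2, and the norm inequality
   '[Res[Z] chi] <= |G : Z| '[chi] turns full ramification into vanishing off
   Z(G).  The characters in Irr(G | H) all vanish off Z(G) exactly when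
   V(G | H) <= Z(G), which gives the first claim.  For the maximality, kernels
   are normal, so Irr(G | N) is contained in Irr(G | H) for the normal closure
   N of H; hence N, and so H, lies in U(G). *)

Import GRing.Theory Num.Theory.

Section CentralRestriction.
Local Open Scope ring_scope.

Variables (gT : finGroupType) (G : {group gT}).

Section CentralSubgroup.

Variables (Z : {group gT}).
Hypothesis sZZG : Z \subset 'Z(G).

Lemma cfRes_central_irr (i : Iirr G) :
  exists j : Iirr Z, 'Res[Z] 'chi[G]_i = 'chi_i 1%g *: 'chi[Z]_j.
Proof.
have sZZchi : Z \subset ('Z('chi_i))%CF.
  by apply: subset_trans sZZG _; rewrite -cap_cfcenter_irr (bigcap_inf i).
have [xi Lxi Dchi] := cfcenter_Res 'chi_i.
have /irrP[j Dj] := lin_char_irr (cfRes_lin_char Z Lxi).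
by exists j; rewrite -Dj -(cfResRes _ sZZchi (cfcenter_sub _)) Dchi linearZ.
Qed.

Lemma irr1_sqr_index_central (i : Iirr G) :
  ('chi[G]_i 1%g ^+ 2 = #|G : Z|%:R) <-> ('chi_i \in 'CF(G, Z)).
Proof.
have sZG : Z \subset G := subset_trans sZZG (center_sub G).
have [j Dj] := cfRes_central_irr i.
have := cfnorm_Res_leif 'chi_i sZG.
rewrite Dj cfnormZ !cfnorm_irr !mulr1 gtr0_norm ?irr1_gt0 // => leif_norm.
by rewrite -leif_norm.2; split=> [->|/eqP].
Qed.

End CentralSubgroup.

Lemma fully_ramified_cfun_on (i : Iirr G) :
  fully_ramified i <-> ('chi_i \in 'CF(G, 'Z(G))).
Proof.
have sqrE := irr1_sqr_index_central (subxx 'Z(G)) i.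
split=> [[_ /sqrE] // | /sqrE chi1_sqr]; split=> //.
exact: cfRes_central_irr (subxx 'Z(G)) i.
Qed.

End CentralRestriction.

Section VanishingSubgroups.
Local Open Scope ring_scope.

Variables (gT : finGroupType) (G : {group gT}).

Lemma Vsub_subP (H : {set gT}) (N : {group gT}) :
  Vsub G H \subset N <-> (forall i : Iirr G, irr_over H i -> 'chi_i \in 'CF(G, N)).
Proof.
rewrite /Vsub gen_subG; split=> [sVN i Hi | onN].
  apply/cfun_onP=> x Nx; have [Gx | /cfun0->//] := boolP (x \in G).
  apply: contraNeq Nx => chi_x; apply: (subsetP sVN).
  by rewrite inE Gx; apply/existsP; exists i; rewrite Hi.
apply/subsetP=> x; rewrite inE => /andP[_ /existsP[i /andP[Hi chi_x]]].
by apply: contraR chi_x => Nx; rewrite (cfun_onP (onN i Hi)).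
Qed.

Lemma irr_over_Usub_on (N : {group gT}) (i : Iirr G) :
  irr_over (Usub G N) i -> 'chi_i \in 'CF(G, N).
Proof.
apply: contraR => notNi; rewrite /irr_over /Usub gen_subG.
apply/bigcupsP=> H /andP[_ /Vsub_subP onN].
by apply: contraR notNi => Hi; apply: onN.
Qed.

Lemma normal_sub_Usub (H : {group gT}) (N : {set gT}) :
  H <| G -> Vsub G H \subset N -> H \subset Usub G N.
Proof. by move=> nHG sVN; apply: sub_gen; apply: (bigcup_max H); rewrite ?nHG. Qed.

Lemma irr_over_normal_closure (H : {set gT}) (i : Iirr G) :
  irr_over <<class_support H G>> i -> irr_over H i.
Proof.
apply: contra => sH_ker.
by rewrite gen_subG class_support_sub_norm // normal_norm // cfker_normal.
Qed.

End VanishingSubgroups.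

Theorem theoremH (gT : finGroupType) (G : {group gT}) :
  (forall i : Iirr G, irr_over (Ugrp G) i -> fully_ramified i) /\
  (forall H : {group gT}, H \subset G ->
     (forall i : Iirr G, irr_over H i -> fully_ramified i) ->
     H \subset Ugrp G).
Proof.
split=> [i /(irr_over_Usub_on (N := 'Z(G)%G)) | H sHG FR_H].
  by move/fully_ramified_cfun_on.
set N := <<class_support H G>>%G.
have nNG : N <| G.
  by rewrite /normal gen_subG class_support_subG //= norms_gen ?class_support_norm.
apply: subset_trans (sub_gen (sub_class_support G H)) _.
apply: normal_sub_Usub nNG _.
apply/(Vsub_subP G N 'Z(G)%G) => i /irr_over_normal_closure.
by move/FR_H/fully_ramified_cfun_on.
Qed.
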